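(* Let $\pi\in D_n$ and use the block decomposition and notation described in the context. Assume $r_\mu\ge 1$ and $\sum_{j=1}^{r_\mu} i_{k_j}\le k_1$ (i.e. $\Phi(\pi)$ is a standard OGS elementary element). Then $\pi$ can be written uniquely as $\pi=\pi^{\bullet}\cdot\pi^{\circ}$ with $\pi^{\bullet}\in Id^{\bullet}_n$ and $\pi^{\circ}\in S^{\circ}_n$, and $$\pi^{\circ}=\prod_{j=1}^{r_\mu}t_{k_j}^{i_{k_j}},\qquad \pi^{\bullet}=\Big(\prod_{\alpha\in A} w_{\operatorname{maj}_\alpha(\pi)}\Big)\cdot w_{L_{1_1}}\cdots w_{L_{1_{\nu_1}}}\cdot w_{L_{2_1}}\cdots w_{L_{2_{\nu_2}}}\cdots w_{L_{(\mu-1)_1}}\cdots w_{L_{(\mu-1)_{\nu_{\mu-1}}}},$$ where $A=\{\alpha\in\{1,\dots,\mu-1\}:\ \nu_\alpha \text{ is odd and } 1\le \operatorname{maj}_\alpha(\pi)<k_1\}$, the first product taken in increasing order of $\alpha$. Moreover, viewed in $S_n$, $\pi^{\circ}$ has the same standard OGS form as $\Phi(\pi)$.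
   Context: $D_n$ ($n\ge2$) is the Coxeter group with generators $s_{1'},s_1,\dots,s_{n-1}$ and relations $s^2=1$, $(s_i s_{i+1})^3=1$, $(s_is_j)^2=1$ for $|i-j|\ge 2$, $(s_{1'}s_2)^3=1$, $(s_{1'}s_i)^2=1$ for $i\ne 2$. Put $t_k=s_1\cdots s_{k-1}$ ($2\le k\le n$), $w_k=s_k s_{k-1}\cdots s_2 s_1 s_{1'} s_2\cdots s_k$ ($1\le k\le n-1$). Every $\pi\in D_n$ has a unique expression $w_{1}^{j_{1}} t_{2}^{i_{2}} w_{2}^{j_{2}} \cdots w_{n-1}^{j_{n-1}} t_{n}^{i_{n}}$ ($0\le i_k\le k-1$, $0\le j_k\le1$). $\Phi:D_n\to S_n$ is the homomorphism $s_{1'}\mapsto s_1$, $s_i\mapsto s_i$; $\Phi(\pi)=t_2^{i_2}\cdots t_n^{i_n}$ in $S_n$. $S^{\circ}_n=\langle s_1,\dots,s_{n-1}\rangle\le D_n$, and $Id^\bullet_n=\{\pi:\Phi(\pi)=1\}=\langle w_1,\dots,w_{n-1}\rangle$. Block decomposition: deleting factors with zero exponent, the expression of $\pi$ becomes a word of factors $t_k^{i}$ ($i\ge1$) and $w_L$; grouping maximal runs gives $\pi=\pi_1^\circ\pi_1^\bullet\pi_2^\circ\pi_2^\bullet\cdots\pi_{\mu-1}^\circ\pi_{\mu-1}^\bullet\pi_\mu^\circ$, where each $\pi_\alpha^\bullet=w_{L_{\alpha_1}}\cdots w_{L_{\alpha_{\nu_\alpha}}}$ ($\nu_\alpha\ge1$,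 $L_{\alpha_1}<\dots<L_{\alpha_{\nu_\alpha}}$) is a maximal run of $w$-factors, each $\pi_\alpha^\circ$ with $2\le\alpha\le\mu-1$ is a nonempty maximal run of $t$-factors, and $\pi_1^\circ,\pi_\mu^\circ$ are runs of $t$-factors that may be empty ($=1$). Listing all $t$-factors in order as $t_{k_1}^{i_{k_1}},\dots,t_{k_{r_\mu}}^{i_{k_{r_\mu}}}$ ($k_1<\dots<k_{r_\mu}$), $\pi_\alpha^\circ$ consists of those with indices $r_{\alpha-1}+1,\dots,r_\alpha$ ($r_0=0$). Define $\operatorname{maj}_\alpha(\pi)=\sum_{j=1}^{r_\alpha}i_{k_j}$. *)

(* D_n is realized concretely as the group of even signed
   permutations of {+-1,...,+-n}: permutations of bool * 'I_n (the boolean is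
   the sign, true = negative; point k in 1..n is the ordinal k-1), generated by
   the images of the Coxeter generators s_{1'}, s_1, ..., s_{n-1}. *)
From mathcomp Require Import all_boot all_order all_fingroup.
Set Implicit Arguments.
Unset Strict Implicit.
Unset Printing Implicit Defensive.

Import GroupScope.
Local Open Scope group_scope.

Section Defs.
Variable n : nat.

Definition pt := (bool * 'I_n)%type.

Definition sgen (k : nat) : {perm pt} :=
  match (insub k.-1 : option 'I_n), (insub k : option 'I_n) with
  | Some a, Some b => tperm (false, a) (false, b) * tperm (true, a) (true, b)
  | _, _ => 1
  end.

Definition sgen1' : {perm pt} :=
  match (insub 0%N : option 'I_n), (insub 1%N : option 'I_n) with
  | Some a, Some b => tperm (false, a) (true, b) * tperm (true, a) (false, b)
  | _, _ => 1
  end.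

Definition Sgens : {set {perm pt}} := [set sgen k | k : 'I_n & 0 < k].

Definition Dn : {set {perm pt}} := << sgen1' |: Sgens >>.
Definition Scirc : {set {perm pt}} := << Sgens >>.

Definition Phi (p : {perm pt}) (x : 'I_n) : 'I_n := (p (false, x)).2.

Definition Idbullet : {set {perm pt}} :=
  [set p in Dn | [forall x : 'I_n, Phi p x == x]].

(* t_k = s_1 ... s_{k-1} ;  w_k = s_k ... s_1 s_{1'} s_2 ... s_k *)
Definition tD (k : nat) : {perm pt} := \prod_(1%N <= m < k) sgen m.
Definition wD (k : nat) : {perm pt} :=
  (\prod_(m <- rev (iota 1%N k)) sgen m) * sgen1' * \prod_(m <- iota 2%N k.-1) sgen m.

Definition nf (i j : nat -> nat) : {perm pt} :=
  \prod_(1%N <= k < n) (wD k ^+ j k * tD k.+1 ^+ i k.+1).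

Definition sS (k : nat) : {perm 'I_n} :=
  match (insub k.-1 : option 'I_n), (insub k : option 'I_n) with
  | Some a, Some b => tperm a b
  | _, _ => 1
  end.
Definition tS (k : nat) : {perm 'I_n} := \prod_(1%N <= m < k) sS m.

Inductive fac := FT of nat & nat (* t_k^e *) | FW of nat .

Definition isW (f : fac) : bool := if f is FW _ then true else false.
Definition texp (f : fac) : nat := if f is FT _ e then e else 0.
Definition wval (f : fac) : {perm pt} := if f is FW L then wD L else 1.

Definition red (i j : nat -> nat) : seq fac :=
  flatten [seq (if j k != 0 then [:: FW k] else [::]) ++
               (if i k.+1 != 0 then [:: FT k.+1 (i k.+1)] else [::])
          | k <- iota 1%N n.-1].

Definition tidx (i : nat -> nat) : seq nat := [seq k <- iota 2%N n.-1 | i k != 0].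

End Defs.

Fixpoint chunk (s : seq fac) : seq (seq fac) :=
  match s with
  | [::] => [::]
  | x :: s' =>
      let cs := chunk s' in
      match cs with
      | (y :: g) :: rest =>
          if isW x == isW y then (x :: y :: g) :: rest else [:: x] :: cs
      | _ => [:: x] :: cs
      end
  end.

Definition isWchunk (c : seq fac) : bool := if c is f :: _ then isW f else false.

(* sum of the exponents of all t-factors in the runs before position m;
   for the run of w's at position m (= pi^bullet_alpha) this is maj_alpha *)
Definition majAt (cs : seq (seq fac)) (m : nat) : nat :=
  sumn [seq texp f | f <- flatten (take m cs)].

Section Defs2.
Variable n : nat.

Definition inA (i j : nat -> nat) (m : nat) : bool :=
  let cs := chunk (red n i j) in
  let c := nth [::] cs m in
  [&& isWchunk c, odd (size c), 0 < majAt cs m & majAt cs m < head 0 (tidx n i)].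

Definition piCirc (i : nat -> nat) : {perm pt n} :=
  \prod_(k <- tidx n i) tD n k ^+ i k.

Definition piBullet (i j : nat -> nat) : {perm pt n} :=
  let cs := chunk (red n i j) in
  (\prod_(m < size cs | inA i j m) wD n (majAt cs m)) *
  \prod_(f <- red n i j | isW f) wval n f.

Definition PhiOGS (i : nat -> nat) : {perm 'I_n} :=
  \prod_(k <- tidx n i) tS n k ^+ i k.

End Defs2.

From mathcomp Require Import all_boot all_order all_fingroup.
From mathcomp Require Import zify.
Import GroupScope.
Local Open Scope group_scope.
Set Implicit Arguments. Unset Strict Implicit. Unset Printing Implicit Defensive.

(* The
   generators s_k are unsigned and s_1' is signed, so every element of D_n is
   [flips f * unsigned g] with Phi reading off g; hence the factorization through
   Id•_n * S°_n exists and is unique, and π° is the unsigned lift of Phi(π).  In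
   these coordinates w_L = flips {0, L} (ordinal k stands for the point k+1).
   Reading the normal form from the left, each factor w_{m+1} is preceded by
   T = t_2^{i_2} ... t_{m+1}^{i_{m+1}}, and commuting T past it turns it into the
   flip of the preimage of {0, m+1} under T.  The nonzero exponents start at k_1
   and add up to M <= k_1, so T fixes m+1 and sends M mod k_1 to 0: the conjugate
   is w_M w_{m+1} if 0 < M < k_1 and w_{m+1} otherwise.  Flips commute and are
   involutions, and M is constant along a run of w-factors, so the extra factors
   w_M cancel in pairs and survive exactly for the runs of odd length. *)

Lemma iotaSr m k : iota m k.+1 = rcons (iota m k) (m + k).
Proof. by rewrite -cats1 -addn1 iotaD. Qed.

Lemma tpermE (T : finType) (x y z : T) :
  tperm x y z = if z == x then y else if z == y then x else z.
Proof.
case: tpermP => [->|->|/eqP/negbTE-> /eqP/negbTE->]; rewrite ?eqxx //.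
by case: eqP => [->|].
Qed.

Lemma head_filter_iota (p : pred nat) a m : has p (iota a m) ->
  let K := head 0 [seq k <- iota a m | p k] in
  [/\ a <= K < a + m, p K & forall k, a <= k < K -> ~~ p k].
Proof.
elim: m a => [//|m IH] a /=; case: ifP => [pa _|pa /IH[K_range pK K_min]] /=.
  by split=> // [|k]; lia.
split=> // [|k k_range]; first by lia.
have [->|ka] := eqVneq k a; first by rewrite pa.
by apply: K_min; lia.
Qed.

Definition wflip (L x : nat) : bool := (x == 0) || (x == L).

Definition maj_flip (K M x : nat) : bool := (0 < M < K) && wflip M x.

Definition sperm_fun n (f : 'I_n -> bool) (g : {perm 'I_n}) (p : pt n) : pt n :=
  (p.1 (+) f p.2, g p.2).

Lemma sperm_fun_inj n f g : injective (@sperm_fun n f g).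
Proof.
move=> [b x] [c y] [] /= eq_sign /perm_inj eq_xy; subst y; congr (_, _).
by move: eq_sign; case: b; case: c; case: (f x).
Qed.

Definition sperm n f g : {perm pt n} := perm (@sperm_fun_inj n f g).
Definition unsigned n (g : {perm 'I_n}) : {perm pt n} := sperm (fun _ => false) g.
Notation flips f := (sperm f 1).

Section SignedPermutations.
Variable n : nat.
Implicit Types (f : 'I_n -> bool) (g : {perm 'I_n}).

Lemma spermE f g b x : sperm f g (b, x) = (b (+) f x, g x).
Proof. by rewrite permE. Qed.

Lemma eq_sperm f f' g : f =1 f' -> sperm f g = sperm f' g.
Proof. by move=> eq_f; apply/permP => -[b x]; rewrite !spermE eq_f. Qed.

Lemma spermM f g f' g' :
  sperm f g * sperm f' g' = sperm (fun x => f x (+) f' (g x)) (g * g').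
Proof. by apply/permP => -[b x]; rewrite permM !spermE permM /= addbA. Qed.

Lemma sperm_inj f g f' g' : sperm f g = sperm f' g' -> f =1 f' /\ g = g'.
Proof.
move=> eq_fg; split=> [x|].
  by have := congr1 (fun p : {perm pt n} => (p (false, x)).1) eq_fg; rewrite /= !spermE.
apply/permP => x; have := congr1 (fun p : {perm pt n} => (p (false, x)).2) eq_fg.
by rewrite /= !spermE.
Qed.

Lemma sperm_flipsM f g : flips f * unsigned g = sperm f g.
Proof. by rewrite spermM mul1g; apply: eq_sperm => x; rewrite addbF. Qed.

Lemma flips_prod (I : Type) (r : seq I) (P : pred I) (F : I -> 'I_n -> bool) :
  \prod_(a <- r | P a) flips (F a) =
  flips (fun x => \big[addb/false]_(a <- r | P a) F a x).
Proof.
elim: r => [|a r IH].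
  rewrite big_nil; apply/permP => -[b x].
  by rewrite spermE !perm1 big_nil addbF.
rewrite big_cons IH; case: ifP => Pa.
  by rewrite spermM mulg1; apply: eq_sperm => x; rewrite perm1 big_cons Pa.
by apply: eq_sperm => x; rewrite big_cons Pa.
Qed.

Lemma Phi_sperm f g : Phi (sperm f g) =1 g.
Proof. by move=> x; rewrite /Phi spermE. Qed.

Lemma unsignedM : {morph @unsigned n : g h / g * h}.
Proof. by move=> g h; rewrite spermM. Qed.

Canonical unsigned_morphism := @Morphism _ _ [set: _] (@unsigned n) (in2W unsignedM).

Lemma unsigned1 : unsigned 1 = 1 :> {perm pt n}.
Proof. exact: morph1. Qed.

End SignedPermutations.

Section Generators.
Variable n : nat.

Lemma tperm_pair_sperm (a b : 'I_n) (c : bool) : a != b ->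
  tperm (false, a) (c, b) * tperm (true, a) (~~ c, b) =
  sperm (fun x => c && ((x == a) || (x == b))) (tperm a b).
Proof.
move=> /negbTE ab; apply/permP => -[d x]; rewrite permM spermE !tpermE.
have ba : (b == a) = false by rewrite eq_sym.
case: (eqVneq x a) => [->|/negbTE xa]; last case: (eqVneq x b) => [->|/negbTE xb];
  case: c; case: d; do 3 rewrite ?xpair_eqE /= ?eqxx ?ab ?ba ?xa ?xb //=.
Qed.

Lemma sgen_unsigned k : sgen n k = unsigned (sS n k).
Proof.
rewrite /sgen /sS; case: (insub k.-1 : option 'I_n) => [a|];
  case: (insub k : option 'I_n) => [b|];
  rewrite ?unsigned1 //.
have [<-|ab] := eqVneq a b; first by rewrite !tperm1 mulg1 unsigned1.
exact: (tperm_pair_sperm false ab).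
Qed.

Lemma sgen1'_sperm : 1 < n -> sgen1' n = sperm (fun x => wflip 1 x) (sS n 1).
Proof.
move=> n_gt1; rewrite /sgen1' /sS /=.
case: insubP => [a _ val_a|]; last by rewrite ltnW.
case: insubP => [b _ val_b|]; last by rewrite n_gt1.
have ab : a != b by rewrite -val_eqE val_a val_b.
rewrite (tperm_pair_sperm true ab); apply: eq_sperm => x.
by rewrite /wflip -val_b -val_a !val_eqE.
Qed.

Lemma sS_val k (x : 'I_n) : 0 < k < n ->
  nat_of_ord (sS n k x) =
    if x == k.-1 :> nat then k else if x == k :> nat then k.-1 else x.
Proof.
move=> /andP[k_gt0 k_lt_n]; rewrite /sS.
case: insubP => [a _ val_a|]; last by rewrite (leq_ltn_trans (leq_pred k)).
case: insubP => [b _ val_b|]; last by rewrite k_lt_n.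
rewrite tpermE -val_a -val_b !val_eqE.
by case: (x == a); case: (x == b).
Qed.

Lemma sS_mulss k : sS n k * sS n k = 1.
Proof.
rewrite /sS; case: (insub k.-1 : option 'I_n) => [a|];
  case: (insub k : option 'I_n) => [b|]; by rewrite ?tperm2 ?mulg1.
Qed.

Lemma wD1 : wD n 1 = sgen n 1 * sgen1' n.
Proof. by rewrite /wD /= big_seq1 big_nil mulg1. Qed.

Lemma wDS L : 0 < L -> wD n L.+1 = sgen n L.+1 * wD n L * sgen n L.+1.
Proof.
case: L => [//|L] _.
rewrite /wD [iota 1 L.+2]iotaSr [iota 2 L.+1]iotaSr.
by rewrite rev_rcons big_cons -cats1 big_cat big_seq1 /= !mulgA.
Qed.

Lemma wD_flips L : 0 < L < n -> wD n L = flips (fun x => wflip L x).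
Proof.
elim: L => [//|L IH] /andP[_ L_lt_n].
have s_val x := sS_val x (L_lt_n : 0 < L.+1 < n).
case: L IH L_lt_n s_val => [|L] IH L_lt_n s_val.
  rewrite wD1 sgen_unsigned sgen1'_sperm // spermM sS_mulss.
  by apply: eq_sperm => x; rewrite /wflip s_val /=; repeat case: ifP; lia.
rewrite wDS // IH ?(ltnW L_lt_n) // sgen_unsigned !spermM mulg1 sS_mulss.
by apply: eq_sperm => x; rewrite /wflip s_val addbF /=; repeat case: ifP; lia.
Qed.

Lemma tD_unsigned k : tD n k = unsigned (tS n k).
Proof.
by rewrite /tD /tS morph_prod //; apply: eq_bigr => m _; rewrite sgen_unsigned.
Qed.

Lemma tS_val k (x : 'I_n) : 0 < k <= n ->
  nat_of_ord (tS n k x) = if x == 0 :> nat then k.-1 else if x < k then x.-1 else x.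
Proof.
elim: k => [//|k IH] /andP[_ k_le_n].
case: k IH k_le_n => [|k] IH k_le_n.
  by rewrite /tS big_geq // perm1; repeat case: ifP; lia.
rewrite /tS big_nat_recr //= permM sS_val; last by lia.
rewrite -/(tS n k.+1) IH; last by lia.
by repeat case: ifP; lia.
Qed.

Lemma tSX_sub k e (x : 'I_n) : 0 < k <= n -> e <= x < k ->
  nat_of_ord ((tS n k ^+ e) x) = x - e.
Proof.
move=> k_range; elim: e => [|e IH] e_range; first by rewrite expg0 perm1 subn0.
by rewrite expgSr permM tS_val // IH; [repeat case: ifP; lia | lia].
Qed.

Lemma tSX_fix k e (x : 'I_n) : 0 < k <= n -> k <= x -> (tS n k ^+ e) x = x.
Proof.
move=> k_range k_le_x; elim: e => [|e IH]; first by rewrite expg0 perm1.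
by rewrite expgSr permM IH; apply: ord_inj; rewrite tS_val //; repeat case: ifP; lia.
Qed.

Lemma tSX_0 k e (x : 'I_n) : 0 < k <= n -> 0 < e <= k -> x = 0 :> nat ->
  nat_of_ord ((tS n k ^+ e) x) = k - e.
Proof.
move=> k_range; case: e => [//|e] e_range x0.
by rewrite expgS permM tSX_sub // tS_val // x0 /=; lia.
Qed.

End Generators.

Section Subgroups.
Variable n : nat.

Definition signed_perms : {set {perm pt n}} :=
  [set p : {perm pt n} |
    [forall c, [forall x, p (c, x) == (c (+) (p (false, x)).1, (p (false, x)).2)]]].

Lemma signed_permsP (p : {perm pt n}) :
  reflect (forall c x, p (c, x) = (c (+) (p (false, x)).1, (p (false, x)).2))
          (p \in signed_perms).
Proof.
rewrite inE; apply: (iffP forallP) => [sp c x | sp c].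
  by move/forallP: (sp c) => /(_ x) /eqP.
by apply/forallP => x; rewrite sp.
Qed.

Lemma signed_perms_group : group_set signed_perms.
Proof.
apply/group_setP; split; first by apply/signed_permsP => c x; rewrite !perm1 addbF.
move=> p q /signed_permsP sp /signed_permsP sq; apply/signed_permsP => c x.
by rewrite !permM sp sq [in RHS]sp sq [in RHS]sq /= addbA.
Qed.

Canonical signed_perms_groupType := Group signed_perms_group.

Lemma sperm_signed f g : sperm f g \in signed_perms.
Proof. by apply/signed_permsP => c x; rewrite !spermE. Qed.

Lemma Dn_signed : 1 < n -> Dn n \subset signed_perms.
Proof.
move=> n_gt1; rewrite gen_subG; apply/subsetP => p /setU1P[->|/imsetP[k _ ->]].
  by rewrite sgen1'_sperm // sperm_signed.
by rewrite sgen_unsigned sperm_signed.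
Qed.

Lemma Idbullet_flips a :
  1 < n -> a \in Idbullet n -> a = flips (fun x => (a (false, x)).1).
Proof.
move=> n_gt1; rewrite inE => /andP[/(subsetP (Dn_signed n_gt1)) /signed_permsP sa].
move=> /forallP Phi_a; apply/permP => -[c x].
by rewrite sa spermE perm1; move/eqP: (Phi_a x); rewrite /Phi => ->.
Qed.

Lemma sgen_Scirc m : sgen n m \in Scirc n.
Proof.
have [/andP[m_gt0 m_lt_n]|out] := boolP (0 < m < n).
  by apply: mem_gen; apply/imsetP; exists (Ordinal m_lt_n); rewrite ?inE.
suff -> : sgen n m = 1 by apply: group1.
rewrite /sgen; case: m out => [|m] out /=.
  by case: (insub 0 : option 'I_n) => // a; rewrite !tperm1 mulg1.
by rewrite [insub m.+1]insubN //; case: (insub m : option 'I_n).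
Qed.

Lemma Scirc_unsigned b : b \in Scirc n -> exists g, b = unsigned g.
Proof.
have : Scirc n \subset @unsigned n @* [set: {perm 'I_n}].
  rewrite gen_subG; apply/subsetP => _ /imsetP[k _ ->].
  by rewrite sgen_unsigned mem_morphim ?inE.
by move/subsetP => sub /sub /morphimP[g _ _ ->]; exists g.
Qed.

Lemma tD_Scirc k : tD n k \in Scirc n.
Proof. by apply: group_prod => m _; apply: sgen_Scirc. Qed.

Lemma wD_Dn L : wD n L \in Dn n.
Proof.
have sgen_Dn m : sgen n m \in Dn n.
  by apply: subsetP (sgen_Scirc m); rewrite genS // subsetUr.
by rewrite !groupM ?(group_prod _ (fun m _ => sgen_Dn m)) // mem_gen ?setU11.
Qed.

Lemma Idbullet_Scirc_unique f g a b : 1 < n ->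
  a \in Idbullet n -> b \in Scirc n -> a * b = sperm f g ->
  a = flips f /\ b = unsigned g.
Proof.
move=> n_gt1 /(Idbullet_flips n_gt1) -> /Scirc_unsigned[h ->].
rewrite sperm_flipsM => /sperm_inj[eq_f <-]; split=> //.
exact: eq_sperm.
Qed.

End Subgroups.

Section TPrefix.
Variables (n : nat) (i : nat -> nat) (K : nat).
Hypotheses (K_ge2 : 2 <= K) (K_le_n : K <= n) (iK_neq0 : i K != 0).
Hypothesis i_lt_K : forall k, 2 <= k < K -> i k = 0.

Definition tprefix m : {perm 'I_n} := \prod_(k <- iota 1 m) tS n k.+1 ^+ i k.+1.
Definition maj m := \sum_(k <- iota 1 m) i k.+1.

Lemma tprefixS m : tprefix m.+1 = tprefix m * tS n m.+2 ^+ i m.+2.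
Proof. by rewrite /tprefix iotaSr -cats1 big_cat big_seq1. Qed.

Lemma majS m : maj m.+1 = maj m + i m.+2.
Proof. by rewrite /maj iotaSr -cats1 big_cat big_seq1. Qed.

Lemma maj0 : maj 0 = 0.
Proof. by rewrite /maj big_nil. Qed.

Lemma maj_mono m m' : m <= m' -> maj m <= maj m'.
Proof. by move=> le_mm'; rewrite /maj -(subnKC le_mm') iotaD big_cat leq_addr. Qed.

Lemma K_le_of_i_gt0 k : 0 < i k -> 2 <= k -> K <= k.
Proof.
move=> ik_gt0 k_ge2; rewrite leqNgt; apply/negP => k_lt.
by rewrite i_lt_K ?k_ge2 in ik_gt0.
Qed.

Lemma maj_gt0 m : (0 < maj m) = (K <= m.+1).
Proof.
elim: m => [|m IH]; first by rewrite maj0; lia.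
rewrite majS addn_gt0 IH; case: (ltngtP K m.+2) => [lt_K|gt_K|<-].
- by rewrite -ltnS lt_K.
- by rewrite i_lt_K /=; lia.
- by rewrite lt0n iK_neq0 orbT.
Qed.

Lemma tprefix_fix m (x : 'I_n) : m < n -> m < x -> tprefix m x = x.
Proof.
elim: m => [|m IH] m_lt_n m_lt_x; first by rewrite /tprefix big_nil perm1.
by rewrite tprefixS permM IH; [apply: tSX_fix; lia | lia | lia].
Qed.

Lemma tprefix_sub m (x : 'I_n) : m < n -> maj m <= x < K ->
  nat_of_ord (tprefix m x) = x - maj m.
Proof.
elim: m => [|m IH] m_lt_n; first by rewrite /tprefix big_nil perm1 maj0 subn0.
rewrite majS tprefixS permM => x_range.
have IHx : nat_of_ord (tprefix m x) = x - maj m by apply: IH; lia.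
have [i0|i_gt0] := posnP (i m.+2); first by rewrite i0 expg0 perm1 IHx addn0.
have K_le : K <= m.+2 by apply: K_le_of_i_gt0.
by rewrite tSX_sub; rewrite ?IHx; lia.
Qed.

Lemma tprefix_wrap m (x : 'I_n) : m < n -> 0 < maj m <= K -> x = 0 :> nat ->
  nat_of_ord (tprefix m x) = K - maj m.
Proof.
move=> + + x0; elim: m => [|m IH] m_lt_n; first by rewrite maj0.
rewrite majS tprefixS permM => maj_range.
have [i0|i_gt0] := posnP (i m.+2).
  by rewrite i0 addn0 in maj_range *; rewrite expg0 perm1 IH //; lia.
have K_le : K <= m.+2 by apply: K_le_of_i_gt0.
have [maj0m|maj_gt0m] := posnP (maj m).
  have K_eq : K = m.+2 by move: (maj_gt0 m); rewrite maj0m; lia.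
  rewrite tSX_0 ?tprefix_sub ?x0 ?maj0m //; lia.
by rewrite tSX_sub; rewrite ?IH //; lia.
Qed.

Lemma tprefix_root m (x : 'I_n) : m < n -> maj m <= K -> x = maj m %% K :> nat ->
  tprefix m x = 0 :> nat.
Proof.
move=> m_lt_n maj_le x_eq.
have [maj0m|maj_gt0m] := posnP (maj m).
  rewrite maj0m mod0n in x_eq.
  by rewrite tprefix_sub; rewrite ?x_eq ?maj0m //; lia.
move: maj_le; rewrite leq_eqVlt => /orP[/eqP maj_eq|maj_lt].
  rewrite maj_eq modnn in x_eq.
  by rewrite tprefix_wrap ?maj_eq ?subnn //; lia.
rewrite modn_small // in x_eq.
by rewrite tprefix_sub; rewrite ?x_eq ?subnn //; lia.
Qed.

Lemma wflip_tprefix m (x : 'I_n) : m.+1 < n -> maj m <= K ->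
  wflip m.+1 (tprefix m x) = maj_flip K (maj m) x (+) wflip m.+1 x.
Proof.
move=> m_lt_n maj_le.
have root_lt_n : maj m %% K < n by apply: leq_trans (ltn_pmod _ _) K_le_n; lia.
have root_eq : (tprefix m x == 0 :> nat) = (x == maj m %% K :> nat).
  apply/eqP/eqP => [tx0|]; last exact: tprefix_root (ltnW m_lt_n) maj_le.
  have root0 := tprefix_root (x := Ordinal root_lt_n) (ltnW m_lt_n) maj_le erefl.
  suff -> : x = Ordinal root_lt_n by [].
  by apply: (perm_inj (s := tprefix m)); apply: ord_inj; rewrite tx0 root0.
have fixed_eq : (tprefix m x == m.+1 :> nat) = (x == m.+1 :> nat).
  have [x_eq|x_neq] := eqVneq (x : nat) m.+1; first by rewrite tprefix_fix ?x_eq //; lia.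
  apply/negbTE; apply: contra x_neq => /eqP tx_eq.
  have tfix : tprefix m (tprefix m x) = tprefix m x by apply: tprefix_fix; lia.
  by rewrite -tx_eq (perm_inj tfix).
rewrite /maj_flip /wflip root_eq fixed_eq.
have [maj0m|maj_gt0m] := posnP (maj m); first by rewrite maj0m mod0n.
have K_le : K <= m.+1 by rewrite -maj_gt0.
move: maj_le; rewrite leq_eqVlt => /orP[/eqP maj_eq|maj_lt].
  by rewrite maj_eq modnn ltnn andbF.
rewrite modn_small // maj_lt /=.
by case: eqP; case: eqP; case: eqP => /=; lia.
Qed.

End TPrefix.

Definition tsum (s : seq fac) : nat := sumn [seq texp f | f <- s].

Lemma tsum_cat s t : tsum (s ++ t) = tsum s + tsum t.
Proof. by rewrite /tsum map_cat sumn_cat. Qed.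

Definition odd_wrun (c : seq fac) : bool := isWchunk c && odd (size c).

Section ConjugationFlips.
Variables (K x : nat).

(* The sign at x of the extra factors w_M created by moving the t-factors of s
   to the right, M being the running sum of the t-exponents. *)
Fixpoint conj_flips (M : nat) (s : seq fac) : bool :=
  match s with
  | [::] => false
  | FT _ e :: s' => conj_flips (M + e) s'
  | FW _ :: s' => maj_flip K M x (+) conj_flips M s'
  end.

Lemma conj_flips_cat s t M :
  conj_flips M (s ++ t) = conj_flips M s (+) conj_flips (M + tsum s) t.
Proof.
elim: s M => [|[k e|L] s IH] M /=; first by rewrite addn0.
  by rewrite IH /tsum /= addnA.
by rewrite IH /tsum /= add0n addbA.
Qed.

Definition run_flips (M : nat) (cs : seq (seq fac)) : bool :=
  \big[addb/false]_(m < size cs | odd_wrun (nth [::] cs m)) maj_flip K (M + majAt cs m) x.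

Lemma run_flips_cons M c cs :
  run_flips M (c :: cs) = (odd_wrun c && maj_flip K M x) (+) run_flips (M + tsum c) cs.
Proof.
rewrite /run_flips big_mkcond big_ord_recl /= /majAt take0 addn0; congr (_ (+) _).
rewrite [RHS]big_mkcond; apply: eq_bigr => m _.
by rewrite /= map_cat sumn_cat addnA.
Qed.

Lemma run_flips_chunk s M : run_flips M (chunk s) = conj_flips M s.
Proof.
elim: s M => [|a s IH] M; first by rewrite /run_flips big_ord0.
have new_run cs : (forall M, run_flips M cs = conj_flips M s) ->
    run_flips M ([:: a] :: cs) = conj_flips M (a :: s).
  move=> IHcs; rewrite run_flips_cons IHcs /tsum.
  by case: a => [k e|L] /=; rewrite ?addn0.
rewrite /=; move: IH; case: (chunk s) => [|[|y g] cs] IH; try exact: new_run.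
case: ifP => [same_kind|_]; last exact: new_run.
clear new_run.
case: a y same_kind IH => [k e|L] [k' e'|L'] //= _ IH;
  rewrite -IH !run_flips_cons /odd_wrun /tsum /=; first by rewrite addnA.
by rewrite add0n; case: (odd (size g)); case: (maj_flip K M x); case: (run_flips _ _).
Qed.

End ConjugationFlips.


Definition wlabel (f : fac) : nat := if f is FW L then L else 0.

Definition wsign (s : seq fac) (x : nat) : bool :=
  \big[addb/false]_(f <- s | isW f) wflip (wlabel f) x.

Lemma wval_prod n s : all (fun f => isW f ==> (0 < wlabel f < n)) s ->
  \prod_(f <- s | isW f) wval n f = flips (fun x => wsign s x).
Proof.
rewrite -flips_prod; elim: s => [|f s IH] /=; first by rewrite !big_nil.
case/andP=> f_ok /IH{}IH; rewrite !big_cons IH.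
by case: f f_ok => //= L /wD_flips ->.
Qed.

Lemma piCirc_unsigned n i : piCirc n i = unsigned (PhiOGS n i).
Proof.
rewrite /piCirc /PhiOGS morph_prod //; apply: eq_bigr => k _.
by rewrite tD_unsigned morphX ?inE.
Qed.

Lemma piCirc_Scirc n i : piCirc n i \in Scirc n.
Proof. by apply: group_prod => k _; rewrite groupX ?tD_Scirc. Qed.

Lemma piBullet_Dn n i j : piBullet n i j \in Dn n.
Proof.
rewrite groupM ?group_prod // => [m _|f _]; first exact: wD_Dn.
by case: f => [k e|L] /=; [apply: group1 | apply: wD_Dn].
Qed.

Section NormalForm.
Variables (n : nat) (i j : nat -> nat).
Hypotheses (n_ge2 : 2 <= n) (j_le1 : forall k, 1 <= k <= n - 1 -> j k <= 1).
Hypotheses (tidx_gt0 : 1 <= size (tidx n i))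
  (sum_le_K : \sum_(k <- tidx n i) i k <= head 0 (tidx n i)).
Local Notation K := (head 0 (tidx n i)).

Lemma head_tidx_spec : [/\ 2 <= K, K <= n, i K != 0 & forall k, 2 <= k < K -> i k = 0].
Proof.
have has_i : has (fun k => i k != 0) (iota 2 n.-1).
  by rewrite has_filter -size_eq0 -/(tidx n i) -lt0n.
have [K_range iK K_min] :
    [/\ 2 <= K < 2 + n.-1, i K != 0 & forall k, 2 <= k < K -> ~~ (i k != 0)]
  := head_filter_iota has_i.
by split=> [||//|k /K_min /negPn/eqP //]; lia.
Qed.

Lemma tidx_big (R : Type) (idx : R) (op : Monoid.law idx) (F : nat -> R) :
  (forall k, i k = 0 -> F k = idx) ->
  \big[op/idx]_(k <- tidx n i) F k = \big[op/idx]_(k <- iota 1 n.-1) F k.+1.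
Proof.
move=> F_idx; rewrite big_filter big_mkcond -(addn1 1) iotaDl big_map.
by apply: eq_bigr => k _; rewrite add1n; case: eqP => [/F_idx|].
Qed.

Lemma sum_tidx : \sum_(k <- tidx n i) i k = maj i n.-1.
Proof. by rewrite tidx_big. Qed.

Lemma PhiOGS_tprefix : PhiOGS n i = tprefix n i n.-1.
Proof. by rewrite /PhiOGS tidx_big // => k ->. Qed.

Definition red_block k := (if j k != 0 then [:: FW k] else [::]) ++
  (if i k.+1 != 0 then [:: FT k.+1 (i k.+1)] else [::]).
Definition red_prefix m := flatten [seq red_block k | k <- iota 1 m].

Lemma red_prefixS m : red_prefix m.+1 = red_prefix m ++ red_block m.+1.
Proof. by rewrite /red_prefix iotaSr map_rcons -cats1 flatten_cat /= cats0 add1n. Qed.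

Lemma tsum_red_prefix m : tsum (red_prefix m) = maj i m.
Proof.
elim: m => [|m IH]; first by rewrite maj0.
rewrite red_prefixS tsum_cat IH majS /red_block /tsum.
by case: (j _ != 0); case: eqP => [->|] /=; rewrite ?addn0.
Qed.

Definition nf_prefix m := \prod_(k <- iota 1 m) (wD n k ^+ j k * tD n k.+1 ^+ i k.+1).

Lemma nf_prefixS m :
  nf_prefix m.+1 = nf_prefix m * (wD n m.+1 ^+ j m.+1 * tD n m.+2 ^+ i m.+2).
Proof. by rewrite /nf_prefix iotaSr -cats1 big_cat big_seq1 add1n. Qed.

Lemma nf_prefix_sperm m : m < n -> nf_prefix m =
  sperm (fun x => conj_flips K x 0 (red_prefix m) (+) wsign (red_prefix m) x)
        (tprefix n i m).
Proof.
have [K_ge2 K_le_n iK K_min] := head_tidx_spec.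
elim: m => [|m IH] m_lt_n.
  rewrite /nf_prefix /tprefix !big_nil -unsigned1.
  by apply: eq_sperm => x; rewrite /wsign big_nil.
have maj_le : maj i m <= K.
  by rewrite (leq_trans _ sum_le_K) // sum_tidx maj_mono //; lia.
have wDj : wD n m.+1 ^+ j m.+1 = flips (fun x => (j m.+1 != 0) && wflip m.+1 x).
  have [->|->] : j m.+1 = 0%N \/ j m.+1 = 1%N by have := @j_le1 m.+1; lia.
    by rewrite expg0 -unsigned1; apply: eq_sperm.
  by rewrite expg1 wD_flips //; lia.
rewrite nf_prefixS IH ?(ltnW m_lt_n) // wDj tD_unsigned -morphX ?inE // !spermM mul1g.
rewrite -tprefixS; apply: eq_sperm => x.
rewrite red_prefixS conj_flips_cat /wsign big_cat -/(wsign _ x) tsum_red_prefix /=.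
rewrite (wflip_tprefix K_ge2 K_le_n iK K_min) //.
rewrite /red_block; case: (j _ != 0); case: (i _ != 0);
  rewrite /= ?big_cons ?big_nil /= ?addbF ?add0n /maj_flip //; apply: addbACA.
Qed.

Lemma red_eq_prefix : red n i j = red_prefix n.-1.
Proof. by []. Qed.

Definition nf_sign (x : 'I_n) : bool :=
  conj_flips K x 0 (red n i j) (+) wsign (red n i j) x.

Lemma nf_sperm : nf n i j = sperm nf_sign (PhiOGS n i).
Proof.
rewrite /nf_sign red_eq_prefix PhiOGS_tprefix -nf_prefix_sperm; last by lia.
by rewrite /nf /nf_prefix /index_iota subn1.
Qed.

Lemma red_prefix_wlabels m :
  m < n -> all (fun f => isW f ==> (0 < wlabel f < n)) (red_prefix m).
Proof.
elim: m => [//|m IH] m_lt_n; rewrite red_prefixS all_cat IH ?(ltnW m_lt_n) //.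
by rewrite /red_block; case: (j _ != 0); case: (i _ != 0) => //=; rewrite m_lt_n.
Qed.

Lemma piBullet_flips : piBullet n i j = flips nf_sign.
Proof.
have [K_ge2 K_le_n _ _] := head_tidx_spec.
rewrite /piBullet wval_prod ?red_eq_prefix ?red_prefix_wlabels -?red_eq_prefix //;
  last by lia.
set cs := chunk _.
rewrite (eq_bigr (fun m : 'I_(size cs) => flips (fun x => wflip (majAt cs m) x)));
  last first.
  by move=> m; rewrite /inA -/cs => /and4P[_ _ maj_gt0 maj_lt]; apply: wD_flips; lia.
rewrite flips_prod spermM mulg1; apply: eq_sperm => x.
rewrite perm1 /nf_sign -run_flips_chunk.
congr (_ (+) _); rewrite /run_flips big_mkcond [RHS]big_mkcond; apply: eq_bigr => m _.
rewrite /inA /odd_wrun /maj_flip add0n -/cs.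
by case: isWchunk; case: odd; case: (0 < _); case: (_ < _).
Qed.

End NormalForm.

Theorem mainTheorem8 (n : nat) (hn : 2 <= n) (i j : nat -> nat)
    (pi : {perm pt n}) :
  (forall k, 2 <= k <= n -> i k <= k - 1) ->
  (forall k, 1 <= k <= n - 1 -> j k <= 1) ->
  pi \in Dn n ->
  pi = nf n i j ->
  1 <= size (tidx n i) ->
  \sum_(k <- tidx n i) i k <= head 0 (tidx n i) ->
  [/\ piBullet n i j \in Idbullet n,
      piCirc n i \in Scirc n,
      pi = piBullet n i j * piCirc n i,
      (forall a b, a \in Idbullet n -> b \in Scirc n -> pi = a * b ->
         a = piBullet n i j /\ b = piCirc n i)
    & (Phi (piCirc n i) =1 PhiOGS n i /\ Phi pi =1 PhiOGS n i)].
Proof.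
move=> _ j_le1 _ -> tidx_gt0 sum_le_K.
have pi_sperm := nf_sperm hn j_le1 tidx_gt0 sum_le_K.
have bullet_flips := piBullet_flips j hn tidx_gt0 sum_le_K.
have pi_factor : nf n i j = piBullet n i j * piCirc n i.
  by rewrite pi_sperm bullet_flips piCirc_unsigned sperm_flipsM.
split=> //.
- rewrite inE piBullet_Dn; apply/forallP => x.
  by rewrite bullet_flips Phi_sperm perm1.
- exact: piCirc_Scirc.
- move=> a b a_Id b_S; rewrite pi_sperm => ab_eq.
  have [-> ->] := Idbullet_Scirc_unique hn a_Id b_S (esym ab_eq).
  by rewrite bullet_flips piCirc_unsigned.
- by rewrite piCirc_unsigned pi_sperm; split; apply: Phi_sperm.
Qed.
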